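(* Let $D,\Omega$ be planar domains with $0\notin D$, $\wp$ a smooth positive function on $\Omega$, and let $f:D\to\Omega$ be a diffeomorphism such that $$\wp^2(f(z))\,f_z\,\overline{f_{\bar z}}=\frac{\mathbf{c}}{z^2},\qquad z\in D,$$ for a real constant $\mathbf{c}$. Assume that for $w\in\Omega$ the following function is well defined: $$\omega(w)=\begin{cases}2\sqrt{-\mathbf{c}}\,\log\dfrac{1}{|f^{-1}(w)|},&\mathbf{c}<0,\\[4pt] 2\sqrt{\mathbf{c}}\,\arg(f^{-1}(w)),&\mathbf{c}>0.\end{cases}$$ Then $\omega$ satisfies $$\mathrm{div}\left(\frac{\nabla\omega}{\sqrt{1+\frac{|\nabla\omega(u,v)|^2}{\wp^2(u,v)}}}\right)=0\quad\text{in }\Omega.$$ *)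

From Stdlib Require Import Reals.
From Coquelicot Require Export Coquelicot.
Open Scope R_scope.

Definition partial_x (g : R * R -> R) (p : R * R) : R :=
  Derive (fun t => g (t, snd p)) (fst p).
Definition partial_y (g : R * R -> R) (p : R * R) : R :=
  Derive (fun t => g (fst p, t)) (snd p).

Fixpoint Ck (n : nat) (U : R * R -> Prop) (g : R * R -> R) : Prop :=
  match n with
  | O => forall p, U p -> continuous g p
  | S k => (forall p, U p -> continuous g p) /\
           (forall p, U p -> ex_derive (fun t => g (t, snd p)) (fst p) /\
                             ex_derive (fun t => g (fst p, t)) (snd p)) /\
           Ck k U (partial_x g) /\ Ck k U (partial_y g)
  end.

Definition smooth_on (U : R * R -> Prop) (g : R * R -> R) : Prop :=
  forall n, Ck n U g.

Definition smooth_map_on (U : R * R -> Prop) (f : C -> C) : Prop :=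
  smooth_on U (fun p => fst (f p)) /\ smooth_on U (fun p => snd (f p)).

Definition connected_set (U : R * R -> Prop) : Prop :=
  forall A B : R * R -> Prop, open A -> open B ->
    (forall p, U p -> A p \/ B p) ->
    (exists p, U p /\ A p) -> (exists p, U p /\ B p) ->
    exists p, U p /\ A p /\ B p.

Definition planar_domain (U : R * R -> Prop) : Prop :=
  (exists p, U p) /\ open U /\ connected_set U.

Definition diffeo (D Om : R * R -> Prop) (f g : C -> C) : Prop :=
  (forall z, D z -> Om (f z)) /\ (forall w, Om w -> D (g w)) /\
  (forall z, D z -> g (f z) = z) /\ (forall w, Om w -> f (g w) = w) /\
  smooth_map_on D f /\ smooth_map_on Om g.

Definition dx (f : C -> C) (z : C) : C :=
  (partial_x (fun p => fst (f p)) z, partial_x (fun p => snd (f p)) z).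
Definition dy (f : C -> C) (z : C) : C :=
  (partial_y (fun p => fst (f p)) z, partial_y (fun p => snd (f p)) z).
Definition f_z (f : C -> C) (z : C) : C :=
  Cmult (RtoC (/2)) (Cminus (dx f z) (Cmult Ci (dy f z))).
Definition f_zbar (f : C -> C) (z : C) : C :=
  Cmult (RtoC (/2)) (Cplus (dx f z) (Cmult Ci (dy f z))).

Definition arg_branch (D : R * R -> Prop) (theta : C -> R) : Prop :=
  (forall z, D z -> z = (Cmod z * cos (theta z), Cmod z * sin (theta z))) /\
  (forall z, D z -> continuous theta z).

(* the function omega of the statement; g = f^{-1}, theta = branch of arg *)
Definition omega (c : R) (g : C -> C) (theta : C -> R) (w : C) : R :=
  if Rlt_dec c 0 then 2 * sqrt (- c) * ln (/ Cmod (g w))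
  else 2 * sqrt c * theta (g w).

Definition flux_x (wp om : R * R -> R) (w : R * R) : R :=
  partial_x om w /
  sqrt (1 + (partial_x om w ^ 2 + partial_y om w ^ 2) / wp w ^ 2).
Definition flux_y (wp om : R * R -> R) (w : R * R) : R :=
  partial_y om w /
  sqrt (1 + (partial_x om w ^ 2 + partial_y om w ^ 2) / wp w ^ 2).

(* Write g = f^-1 and omega = Psi o g, where Psi(z) = 2 sqrt(-c) log (1/|z|) or 2 sqrt(c) arg z.
   The gradient of Psi is V(z) = l / conj z with l^2 = -4c, an antiholomorphic and hence
   divergence-free field. With p = wp o f, the equation for f says exactly that
   p^2 Df^T Df + V V^T = E Id for a scalar E > 0. Solving this for |grad omega|^2 = |Dg^T V|^2 gives
     grad omega / sqrt (1 + |grad omega|^2 / wp^2) = +- adj(Dg) (V o g),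
   from which wp has disappeared. The right-hand side is the Piola transform of V under g, and
   the Piola identity div (adj(Dg) (V o g)) = det(Dg) (div V) o g shows it is divergence free. *)

From Stdlib Require Import Reals Lra.
From Coquelicot Require Import Coquelicot.
Open Scope R_scope.

Definition Cdot (u v : C) : R := fst u * fst v + snd u * snd v.
Definition det2 (u v : C) : R := fst u * snd v - fst v * snd u.

Lemma Cdot_self_pos (z : C) : z <> (0, 0) -> 0 < Cdot z z.
Proof.
  intros Hz. destruct z as [x y]. unfold Cdot; simpl.
  destruct (Req_dec x 0) as [-> | Hx]; [destruct (Req_dec y 0) as [-> | Hy] |].
  - now contradiction Hz.
  - nra.
  - nra.
Qed.

Lemma locally_curve (P : C -> Prop) (c1 c2 : R -> R) (t0 : R) :
  locally (c1 t0, c2 t0) P -> continuous c1 t0 -> continuous c2 t0 ->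
  locally t0 (fun t => P (c1 t, c2 t)).
Proof.
  intros HP H1 H2.
  assert (Hc : continuous (fun t => (c1 t, c2 t)) t0).
  { apply (continuous_comp_2 c1 c2 pair); [exact H1 | exact H2 |].
    intros Q HQ. unfold filtermap. simpl in HQ.
    eapply filter_imp; [|exact HQ]. now intros [u v]. }
  exact (Hc P HP).
Qed.

Lemma locally_line_x (P : C -> Prop) (p : C) :
  locally p P -> locally (fst p) (fun t => P (t, snd p)).
Proof.
  destruct p as [x y]. intros HP.
  exact (locally_curve P (fun t => t) (fun _ => y) x HP (continuous_id x) (continuous_const y x)).
Qed.

Lemma locally_line_y (P : C -> Prop) (p : C) :
  locally p P -> locally (snd p) (fun t => P (fst p, t)).
Proof.
  destruct p as [x y]. intros HP.
  exact (locally_curve P (fun _ => x) (fun t => t) y HP (continuous_const x y) (continuous_id y)).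
Qed.

Lemma is_derive_loc_unique (f1 f2 : R -> R) (x l1 l2 : R) :
  locally x (fun t => f1 t = f2 t) -> is_derive f1 x l1 -> is_derive f2 x l2 -> l1 = l2.
Proof.
  intros Hloc H1 H2.
  rewrite <- (is_derive_unique _ _ _ (is_derive_ext_loc _ _ _ _ Hloc H1)).
  exact (is_derive_unique _ _ _ H2).
Qed.

Lemma is_derive_mul_sub (p1 q1 p2 q2 : R -> R) (t dp1 dq1 dp2 dq2 : R) :
  is_derive p1 t dp1 -> is_derive q1 t dq1 -> is_derive p2 t dp2 -> is_derive q2 t dq2 ->
  is_derive (fun s => p1 s * q1 s - p2 s * q2 s) t
    (dp1 * q1 t + p1 t * dq1 - (dp2 * q2 t + p2 t * dq2)).
Proof.
  intros H1 H2 H3 H4.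
  apply is_derive_Reals.
  apply (derivable_pt_lim_minus (fun s => p1 s * q1 s) (fun s => p2 s * q2 s));
    apply (derivable_pt_lim_mult _ _ t); apply is_derive_Reals; assumption.
Qed.

Lemma smooth_on_continuous (U : C -> Prop) (h : C -> R) (p : C) :
  smooth_on U h -> U p -> continuous h p.
Proof. intros Hh Hp. exact (Hh 0%nat p Hp). Qed.

Lemma smooth_on_partial_x (U : C -> Prop) (h : C -> R) :
  smooth_on U h -> smooth_on U (partial_x h).
Proof. intros Hh n. exact (proj1 (proj2 (proj2 (Hh (S n))))). Qed.

Lemma smooth_on_partial_y (U : C -> Prop) (h : C -> R) :
  smooth_on U h -> smooth_on U (partial_y h).
Proof. intros Hh n. exact (proj2 (proj2 (proj2 (Hh (S n))))). Qed.

Lemma smooth_on_is_derive_x (U : C -> Prop) (h : C -> R) (p : C) :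
  smooth_on U h -> U p -> is_derive (fun t => h (t, snd p)) (fst p) (partial_x h p).
Proof. intros Hh Hp. apply Derive_correct, (proj1 (proj2 (Hh 1%nat)) p Hp). Qed.

Lemma smooth_on_is_derive_y (U : C -> Prop) (h : C -> R) (p : C) :
  smooth_on U h -> U p -> is_derive (fun t => h (fst p, t)) (snd p) (partial_y h p).
Proof. intros Hh Hp. apply Derive_correct, (proj1 (proj2 (Hh 1%nat)) p Hp). Qed.

Lemma smooth_on_differentiable (U : C -> Prop) (h : C -> R) (p : C) :
  open U -> smooth_on U h -> U p ->
  differentiable_pt_lim (fun u v => h (u, v)) (fst p) (snd p) (partial_x h p) (partial_y h p).
Proof.
  intros HU Hh Hp.
  apply filterdiff_differentiable_pt_lim.
  destruct p as [x y].
  eapply filterdiff_ext_lin.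
  - apply (is_derive_filterdiff (fun u v => h (u, v)) x y (fun u v => partial_x h (u, v))).
    + eapply filter_imp; [|exact (HU _ Hp)]. intros [u v] Huv.
      exact (smooth_on_is_derive_x U h (u, v) Hh Huv).
    + exact (smooth_on_is_derive_y U h (x, y) Hh Hp).
    + eapply filterlim_ext; [intros [u v]; reflexivity |].
      exact (smooth_on_continuous U _ _ (smooth_on_partial_x U h Hh) Hp).
  - now intros [u v].
Qed.

Lemma continuous_continuity_2d_pt (h : C -> R) (p : C) :
  continuous h p -> continuity_2d_pt (fun u v => h (u, v)) (fst p) (snd p).
Proof.
  intros H. apply continuity_2d_pt_filterlim. destruct p as [x y].
  eapply filterlim_ext; [|exact H]. now intros [u v].
Qed.

Lemma smooth_on_partial_xy (U : C -> Prop) (h : C -> R) (p : C) :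
  open U -> smooth_on U h -> U p -> partial_x (partial_y h) p = partial_y (partial_x h) p.
Proof.
  intros HU Hh Hp.
  assert (Hx := smooth_on_partial_x U h Hh). assert (Hy := smooth_on_partial_y U h Hh).
  destruct p as [x y]. unfold partial_x, partial_y; simpl.
  apply (Schwarz (fun u v => h (u, v))).
  - apply locally_2d_locally. eapply filter_imp; [|exact (HU _ Hp)]. intros [u v] Huv.
    repeat split.
    + exact (ex_intro _ _ (smooth_on_is_derive_x U h (u, v) Hh Huv)).
    + exact (ex_intro _ _ (smooth_on_is_derive_y U h (u, v) Hh Huv)).
    + exact (ex_intro _ _ (smooth_on_is_derive_x U _ (u, v) Hy Huv)).
    + exact (ex_intro _ _ (smooth_on_is_derive_y U _ (u, v) Hx Huv)).
  - exact (continuous_continuity_2d_pt _ (x, y)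
             (smooth_on_continuous U _ _ (smooth_on_partial_x U _ Hy) Hp)).
  - exact (continuous_continuity_2d_pt _ (x, y)
             (smooth_on_continuous U _ _ (smooth_on_partial_y U _ Hx) Hp)).
Qed.

Definition curve_differentiable_at (h : C -> R) (z : C) (hx hy : R) : Prop :=
  forall (c1 c2 : R -> R) (t0 d1 d2 : R), (c1 t0, c2 t0) = z ->
    is_derive c1 t0 d1 -> is_derive c2 t0 d2 ->
    is_derive (fun t => h (c1 t, c2 t)) t0 (hx * d1 + hy * d2).

Lemma differentiable_curve_differentiable (h : C -> R) (z : C) (hx hy : R) :
  differentiable_pt_lim (fun u v => h (u, v)) (fst z) (snd z) hx hy ->
  curve_differentiable_at h z hx hy.
Proof.
  intros Hh c1 c2 t0 d1 d2 Hz H1 H2. subst z.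
  apply is_derive_Reals, (derivable_pt_lim_comp_2d (fun u v => h (u, v)));
    [exact Hh | apply is_derive_Reals; assumption ..].
Qed.

Lemma curve_differentiable_scal (k : R) (h : C -> R) (z : C) (hx hy : R) :
  curve_differentiable_at h z hx hy ->
  curve_differentiable_at (fun q => k * h q) z (k * hx) (k * hy).
Proof.
  intros Hh c1 c2 t0 d1 d2 Hz H1 H2.
  replace (k * hx * d1 + k * hy * d2) with (k * (hx * d1 + hy * d2)) by ring.
  exact (is_derive_scal _ _ k _ (Hh c1 c2 t0 d1 d2 Hz H1 H2)).
Qed.

Lemma curve_differentiable_lines (U : C -> Prop) (h : C -> R) (g : C -> C) (z : C) (hx hy : R) :
  smooth_map_on U g -> U z -> curve_differentiable_at h (g z) hx hy ->
  is_derive (fun t => h (g (t, snd z))) (fst z) (hx * fst (dx g z) + hy * snd (dx g z)) /\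
  is_derive (fun t => h (g (fst z, t))) (snd z) (hx * fst (dy g z) + hy * snd (dy g z)).
Proof.
  intros [Hg1 Hg2] Hz Hh.
  split.
  - apply (is_derive_ext (fun t => h (fst (g (t, snd z)), snd (g (t, snd z)))));
      [intros t; now rewrite <- surjective_pairing |].
    apply Hh; [destruct z; symmetry; apply surjective_pairing | ..].
    + exact (smooth_on_is_derive_x U _ z Hg1 Hz).
    + exact (smooth_on_is_derive_x U _ z Hg2 Hz).
  - apply (is_derive_ext (fun t => h (fst (g (fst z, t)), snd (g (fst z, t)))));
      [intros t; now rewrite <- surjective_pairing |].
    apply Hh; [destruct z; symmetry; apply surjective_pairing | ..].
    + exact (smooth_on_is_derive_y U _ z Hg1 Hz).
    + exact (smooth_on_is_derive_y U _ z Hg2 Hz).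
Qed.

Lemma diffeo_jacobian_inverse (D Om : C -> Prop) (f g : C -> C) (w : C) :
  open D -> open Om -> diffeo D Om f g -> Om w ->
  fst (dx g w) * fst (dx f (g w)) + fst (dy g w) * snd (dx f (g w)) = 1 /\
  snd (dx g w) * fst (dx f (g w)) + snd (dy g w) * snd (dx f (g w)) = 0 /\
  fst (dx g w) * fst (dy f (g w)) + fst (dy g w) * snd (dy f (g w)) = 0 /\
  snd (dx g w) * fst (dy f (g w)) + snd (dy g w) * snd (dy f (g w)) = 1.
Proof.
  intros HD HOm [_ [HgD [Hgf [Hfg [Hf [Hg1 Hg2]]]]]] Hw.
  assert (Hz : D (g w)) by now apply HgD.
  assert (Hdiff : forall k, smooth_on Om k ->
            curve_differentiable_at k (f (g w)) (partial_x k w) (partial_y k w)).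
  { intros k Hk. rewrite (Hfg w Hw).
    exact (differentiable_curve_differentiable _ _ _ _ (smooth_on_differentiable Om k w HOm Hk Hw)). }
  destruct (curve_differentiable_lines D _ f (g w) _ _ Hf Hz (Hdiff _ Hg1)) as [X1 Y1].
  destruct (curve_differentiable_lines D _ f (g w) _ _ Hf Hz (Hdiff _ Hg2)) as [X2 Y2].
  assert (Hleft : locally (g w) (fun q => g (f q) = q))
    by (eapply filter_imp; [exact Hgf | exact (HD _ Hz)]).
  pose proof (locally_line_x _ _ Hleft) as Hx. pose proof (locally_line_y _ _ Hleft) as Hy.
  repeat split.
  - refine (is_derive_loc_unique _ (fun t => t) _ _ _ _ X1 (is_derive_id _)).
    eapply filter_imp; [| exact Hx]. intros t Ht. exact (f_equal fst Ht).
  - refine (is_derive_loc_unique _ (fun _ => snd (g w)) _ _ _ _ X2 (is_derive_const _ _)).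
    eapply filter_imp; [| exact Hx]. intros t Ht. exact (f_equal snd Ht).
  - refine (is_derive_loc_unique _ (fun _ => fst (g w)) _ _ _ _ Y1 (is_derive_const _ _)).
    eapply filter_imp; [| exact Hy]. intros t Ht. exact (f_equal fst Ht).
  - refine (is_derive_loc_unique _ (fun t => t) _ _ _ _ Y2 (is_derive_id _)).
    eapply filter_imp; [| exact Hy]. intros t Ht. exact (f_equal snd Ht).
Qed.

Lemma jacobian_det_continuous (U : C -> Prop) (g : C -> C) (w : C) :
  smooth_map_on U g -> U w -> continuous (fun q => det2 (dx g q) (dy g q)) w.
Proof.
  intros [Hg1 Hg2] Hw.
  change (continuous (fun q =>
    minus (mult (partial_x (fun p => fst (g p)) q) (partial_y (fun p => snd (g p)) q))
          (mult (partial_y (fun p => fst (g p)) q) (partial_x (fun p => snd (g p)) q))) w).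
  apply (@continuous_minus _ R_AbsRing R_NormedModule);
    apply (@continuous_mult _ R_AbsRing); apply (smooth_on_continuous U);
    auto using smooth_on_partial_x, smooth_on_partial_y.
Qed.

Lemma ln_inv_Cmod_curve (z : C) : z <> (0, 0) ->
  curve_differentiable_at (fun q => ln (/ Cmod q)) z (- fst z / Cdot z z) (- snd z / Cdot z z).
Proof.
  intros Hz0 c1 c2 t0 d1 d2 Hz H1 H2. subst z.
  pose proof (Cdot_self_pos _ Hz0) as Hr. unfold Cdot in Hr; simpl in Hr.
  assert (HS : 0 < sqrt (c1 t0 * c1 t0 + c2 t0 * c2 t0)) by (apply sqrt_lt_R0; lra).
  assert (HSS := sqrt_sqrt (c1 t0 * c1 t0 + c2 t0 * c2 t0) ltac:(lra)).
  unfold Cmod, Cdot; simpl.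
  auto_derive.
  - rewrite !Rmult_1_r.
    repeat split; try (eexists; eassumption); try lra.
    now apply Rinv_0_lt_compat.
  - replace (Derive (fun t => c1 t) t0) with d1 by (symmetry; now apply is_derive_unique).
    replace (Derive (fun t => c2 t) t0) with d2 by (symmetry; now apply is_derive_unique).
    rewrite !Rmult_1_r.
    set (S := sqrt _) in *. rewrite HSS. field. lra.
Qed.

(* By continuity [theta] stays within [PI / 2] of [theta z0], where [atan] inverts [tan]. *)
Lemma arg_branch_local_atan (D : C -> Prop) (theta : C -> R) (z0 : C) :
  open D -> ~ D (0, 0) -> arg_branch D theta -> D z0 ->
  locally z0 (fun z => theta z = theta z0 + atan (det2 z0 z / Cdot z0 z)).
Proof.
  intros HD H0 [Hpolar Hcont] Hz0.
  assert (Hpi : 0 < PI / 2) by (pose proof PI_RGT_0; lra).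
  assert (Hnear := Hcont z0 Hz0 _ (locally_ball (theta z0) (mkposreal _ Hpi))).
  change (locally z0 (fun z => ball (theta z0) (mkposreal _ Hpi) (theta z))) in Hnear.
  generalize (filter_and _ _ Hnear (HD z0 Hz0)). apply filter_imp.
  intros z [Hball Hz]. change (Rabs (theta z - theta z0) < PI / 2) in Hball.
  apply Rabs_def2 in Hball.
  assert (Hmod : forall q, D q -> 0 < Cmod q).
  { intros q Hq. apply Cmod_gt_0. intros ->. exact (H0 Hq). }
  pose proof (Hmod z Hz) as Hr. pose proof (Hmod z0 Hz0) as Hr0.
  pose proof (Hpolar z Hz) as Ez. pose proof (Hpolar z0 Hz0) as Ez0.
  set (r := Cmod z) in *. set (r0 := Cmod z0) in *.
  set (th := theta z) in *. set (th0 := theta z0) in *.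
  rewrite Ez, Ez0. unfold det2, Cdot; simpl.
  assert (Hcos : 0 < cos (th - th0)) by (apply cos_gt_0; lra).
  replace ((r0 * cos th0 * (r * sin th) - r * cos th * (r0 * sin th0)) /
           (r0 * cos th0 * (r * cos th) + r0 * sin th0 * (r * sin th)))
    with (tan (th - th0)).
  - rewrite atan_tan by lra. ring.
  - unfold tan. rewrite sin_minus, cos_minus in *.
    field. split; [| lra].
    apply Rgt_not_eq, Rlt_gt.
    replace (r0 * cos th0 * (r * cos th) + r0 * sin th0 * (r * sin th))
      with (r * r0 * (cos th * cos th0 + sin th * sin th0)) by ring.
    apply Rmult_lt_0_compat; [apply Rmult_lt_0_compat |]; lra.
Qed.

Lemma arg_branch_curve (D : C -> Prop) (theta : C -> R) (z : C) :
  open D -> ~ D (0, 0) -> arg_branch D theta -> D z ->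
  curve_differentiable_at theta z (- snd z / Cdot z z) (fst z / Cdot z z).
Proof.
  intros HD H0 Harg Hz c1 c2 t0 d1 d2 Ez H1 H2. subst z.
  assert (Hz0 : (c1 t0, c2 t0) <> (0, 0)) by (intros E; rewrite E in Hz; exact (H0 Hz)).
  pose proof (Cdot_self_pos _ Hz0) as Hr. unfold Cdot in Hr |- *; simpl in Hr |- *.
  apply (is_derive_ext_loc
    (fun t => theta (c1 t0, c2 t0) + atan (det2 (c1 t0, c2 t0) (c1 t, c2 t) / Cdot (c1 t0, c2 t0) (c1 t, c2 t)))).
  { eapply filter_imp; [| apply (locally_curve _ c1 c2 t0 (arg_branch_local_atan D theta _ HD H0 Harg Hz))].
    - intros t Ht. now rewrite Ht.
    - exact (ex_derive_continuous _ _ (ex_intro _ _ H1)).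
    - exact (ex_derive_continuous _ _ (ex_intro _ _ H2)). }
  unfold det2, Cdot; simpl.
  auto_derive.
  - repeat split; try (eexists; eassumption). lra.
  - replace (Derive (fun t => c1 t) t0) with d1 by (symmetry; now apply is_derive_unique).
    replace (Derive (fun t => c2 t) t0) with d2 by (symmetry; now apply is_derive_unique).
    field. split; [lra |].
    replace (c1 t0 * c2 t0 + - (c1 t0 * c2 t0)) with 0 by ring. nra.
Qed.

(* [l / conj z], the gradient of [Re (conj l * log z)]; being antiholomorphic, it has a
   symmetric trace-free Jacobian. *)
Definition log_grad (l z : C) : C :=
  ((fst l * fst z - snd l * snd z) / Cdot z z, (snd l * fst z + fst l * snd z) / Cdot z z).

Definition log_grad_dx (l z : C) : R :=
  (fst l * (snd z ^ 2 - fst z ^ 2) + 2 * snd l * fst z * snd z) / Cdot z z ^ 2.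
Definition log_grad_dy (l z : C) : R :=
  - (snd l * (fst z ^ 2 - snd z ^ 2) + 2 * fst l * fst z * snd z) / Cdot z z ^ 2.

Lemma log_grad_curve_differentiable (l z : C) : z <> (0, 0) ->
  curve_differentiable_at (fun q => fst (log_grad l q)) z (log_grad_dx l z) (log_grad_dy l z) /\
  curve_differentiable_at (fun q => snd (log_grad l q)) z (log_grad_dy l z) (- log_grad_dx l z).
Proof.
  intros Hz0. pose proof (Cdot_self_pos _ Hz0) as Hr.
  split; intros c1 c2 t0 d1 d2 Ez H1 H2; subst z;
    unfold log_grad, log_grad_dx, log_grad_dy, Cdot in *; simpl in *;
    (auto_derive; [repeat split; try (eexists; eassumption); nra |]);
    replace (Derive (fun t => c1 t) t0) with d1 by (symmetry; now apply is_derive_unique);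
    replace (Derive (fun t => c2 t) t0) with d2 by (symmetry; now apply is_derive_unique);
    field; nra.
Qed.

Lemma log_grad_sq (l z : C) (c : R) : z <> (0, 0) ->
  fst l ^ 2 - snd l ^ 2 = - (4 * c) -> fst l * snd l = 0 ->
  fst (log_grad l z) ^ 2 - snd (log_grad l z) ^ 2
    = - (4 * c * (fst z ^ 2 - snd z ^ 2) / Cdot z z ^ 2) /\
  fst (log_grad l z) * snd (log_grad l z) = - (4 * c * fst z * snd z / Cdot z z ^ 2).
Proof.
  intros Hz0 Hre Him. pose proof (Cdot_self_pos _ Hz0) as Hr.
  unfold log_grad; cbn [fst snd].
  assert (Hc : c = - (fst l ^ 2 - snd l ^ 2) / 4) by lra.
  rewrite Hc. split.
  - replace (((fst l * fst z - snd l * snd z) / Cdot z z) ^ 2 -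
             ((snd l * fst z + fst l * snd z) / Cdot z z) ^ 2)
      with (((fst l ^ 2 - snd l ^ 2) * (fst z ^ 2 - snd z ^ 2) - 4 * (fst l * snd l) * fst z * snd z)
            / Cdot z z ^ 2) by (field; lra).
    rewrite Him. field. lra.
  - replace ((fst l * fst z - snd l * snd z) / Cdot z z * ((snd l * fst z + fst l * snd z) / Cdot z z))
      with (((fst l * snd l) * (fst z ^ 2 - snd z ^ 2) + (fst l ^ 2 - snd l ^ 2) * fst z * snd z)
            / Cdot z z ^ 2) by (field; lra).
    rewrite Him. field. lra.
Qed.

Definition potential (c : R) (theta : C -> R) (z : C) : R :=
  if Rlt_dec c 0 then 2 * sqrt (- c) * ln (/ Cmod z) else 2 * sqrt c * theta z.

(* [potential c theta] is [Re (conj l * log z)] for this [l], and [l ^ 2 = - 4 c]. *)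
Definition potential_coef (c : R) : C :=
  if Rlt_dec c 0 then (- (2 * sqrt (- c)), 0) else (0, 2 * sqrt c).

Lemma potential_coef_sq (c : R) :
  fst (potential_coef c) ^ 2 - snd (potential_coef c) ^ 2 = - (4 * c) /\
  fst (potential_coef c) * snd (potential_coef c) = 0.
Proof.
  unfold potential_coef. destruct (Rlt_dec c 0) as [Hc | Hc]; simpl; split; try ring.
  - rewrite Rmult_1_r, Rmult_opp_opp.
    replace (2 * sqrt (- c) * (2 * sqrt (- c))) with (4 * (sqrt (- c) * sqrt (- c))) by ring.
    rewrite sqrt_sqrt; lra.
  - replace (2 * sqrt c * (2 * sqrt c * 1)) with (4 * (sqrt c * sqrt c)) by ring.
    rewrite sqrt_sqrt; lra.
Qed.

Lemma potential_curve_differentiable (D : C -> Prop) (c : R) (theta : C -> R) (z : C) :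
  open D -> ~ D (0, 0) -> c <> 0 -> (0 < c -> arg_branch D theta) -> D z ->
  curve_differentiable_at (potential c theta) z
    (fst (log_grad (potential_coef c) z)) (snd (log_grad (potential_coef c) z)).
Proof.
  intros HD H0 Hc Harg Hz.
  assert (Hz0 : z <> (0, 0)) by (intros ->; exact (H0 Hz)).
  pose proof (Cdot_self_pos _ Hz0) as Hr.
  unfold potential, potential_coef, log_grad.
  destruct (Rlt_dec c 0) as [Hneg | Hpos]; simpl.
  - pose proof (curve_differentiable_scal (2 * sqrt (- c)) _ _ _ _ (ln_inv_Cmod_curve z Hz0)) as H.
    replace ((- (2 * sqrt (- c)) * fst z - 0 * snd z) / Cdot z z)
      with (2 * sqrt (- c) * (- fst z / Cdot z z)) by (field; lra).
    replace ((0 * fst z + - (2 * sqrt (- c)) * snd z) / Cdot z z)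
      with (2 * sqrt (- c) * (- snd z / Cdot z z)) by (field; lra).
    exact H.
  - assert (Harg' : arg_branch D theta) by (apply Harg; lra).
    pose proof (curve_differentiable_scal (2 * sqrt c) _ _ _ _ (arg_branch_curve D theta z HD H0 Harg' Hz)) as H.
    replace ((0 * fst z - 2 * sqrt c * snd z) / Cdot z z)
      with (2 * sqrt c * (- snd z / Cdot z z)) by (field; lra).
    replace ((2 * sqrt c * fst z + 0 * snd z) / Cdot z z)
      with (2 * sqrt c * (fst z / Cdot z z)) by (field; lra).
    exact H.
Qed.

Lemma hopf_real_parts (f : C -> C) (z : C) (p c : R) : z <> (0, 0) ->
  Cmult (RtoC (p ^ 2)) (Cmult (f_z f z) (Cconj (f_zbar f z))) = Cdiv (RtoC c) (Cmult z z) ->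
  p ^ 2 * Cdot (dx f z) (dx f z) - p ^ 2 * Cdot (dy f z) (dy f z)
    = 4 * c * (fst z ^ 2 - snd z ^ 2) / Cdot z z ^ 2 /\
  p ^ 2 * Cdot (dx f z) (dy f z) = 4 * c * fst z * snd z / Cdot z z ^ 2.
Proof.
  intros Hz0 H. pose proof (Cdot_self_pos _ Hz0) as Hr.
  assert (Hlhs : Cmult (RtoC (p ^ 2)) (Cmult (f_z f z) (Cconj (f_zbar f z)))
    = ((p ^ 2 * Cdot (dx f z) (dx f z) - p ^ 2 * Cdot (dy f z) (dy f z)) / 4,
       - (p ^ 2 * Cdot (dx f z) (dy f z)) / 2)).
  { unfold f_z, f_zbar, Cdot, Cmult, Cminus, Cplus, Copp, Cconj, RtoC, Ci; cbn [fst snd].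
    f_equal; field. }
  assert (Hrhs : Cdiv (RtoC c) (Cmult z z)
    = (c * (fst z ^ 2 - snd z ^ 2) / Cdot z z ^ 2, - (2 * c * fst z * snd z) / Cdot z z ^ 2)).
  { unfold Cdot in Hr |- *. destruct z as [x y].
    unfold Cdiv, Cinv, Cmult, RtoC; cbn [fst snd] in *. f_equal; field; (split; [lra |]);
      replace ((x * x - y * y) ^ 2 + (x * y + y * x) ^ 2) with ((x * x + y * y) ^ 2) by ring;
      apply pow_nonzero; lra. }
  rewrite Hlhs, Hrhs in H.
  pose proof (f_equal fst H) as H1. pose proof (f_equal snd H) as H2. cbn [fst snd] in H1, H2.
  split.
  - match goal with |- ?A = _ => replace A with (4 * (A / 4)) by field end.
    rewrite H1. field. lra.
  - match goal with |- ?A = _ => replace A with (- 2 * (- A / 2)) by field end.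
    rewrite H2. field. lra.
Qed.

Section FluxAlgebra.

(* [fx], [fy] are the columns of [Df] at [z], [gx], [gy] those of [Dg = Df^-1] at [f z], and
   [V] is the gradient of the potential at [z]; [conf_diag] and [conf_off] say that
   [p^2 Df^T Df + V V^T = E Id]. *)
Variables (fx fy gx gy V : C) (p : R).

Hypothesis inv_xx : fst gx * fst fx + fst gy * snd fx = 1.
Hypothesis inv_yx : snd gx * fst fx + snd gy * snd fx = 0.
Hypothesis inv_xy : fst gx * fst fy + fst gy * snd fy = 0.
Hypothesis inv_yy : snd gx * fst fy + snd gy * snd fy = 1.

Lemma inverse_cramer :
  fst gx * det2 fx fy = snd fy /\ fst gy * det2 fx fy = - fst fy /\
  snd gx * det2 fx fy = - snd fx /\ snd gy * det2 fx fy = fst fx.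
Proof.
  unfold det2. repeat split.
  - transitivity (snd fy * (fst gx * fst fx + fst gy * snd fx) - snd fx * (fst gx * fst fy + fst gy * snd fy));
      [ring | rewrite inv_xx, inv_xy; ring].
  - transitivity (fst fx * (fst gx * fst fy + fst gy * snd fy) - fst fy * (fst gx * fst fx + fst gy * snd fx));
      [ring | rewrite inv_xx, inv_xy; ring].
  - transitivity (snd fy * (snd gx * fst fx + snd gy * snd fx) - snd fx * (snd gx * fst fy + snd gy * snd fy));
      [ring | rewrite inv_yx, inv_yy; ring].
  - transitivity (fst fx * (snd gx * fst fy + snd gy * snd fy) - fst fy * (snd gx * fst fx + snd gy * snd fx));
      [ring | rewrite inv_yx, inv_yy; ring].
Qed.

Lemma det2_inverse : det2 gx gy * det2 fx fy = 1.
Proof.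
  destruct inverse_cramer as [Exx [Exy [Eyx Eyy]]].
  transitivity (fst gx * (snd gy * det2 fx fy) - fst gy * (snd gx * det2 fx fy));
    [unfold det2; ring | rewrite Eyy, Eyx, <- inv_xx; ring].
Qed.

Lemma grad_mul_det :
  Cdot V gx * det2 fx fy = fst V * snd fy - snd V * snd fx /\
  Cdot V gy * det2 fx fy = snd V * fst fx - fst V * fst fy.
Proof.
  destruct inverse_cramer as [Exx [Exy [Eyx Eyy]]]. unfold Cdot. split.
  - transitivity (fst V * (fst gx * det2 fx fy) + snd V * (snd gx * det2 fx fy));
      [ring | rewrite Exx, Eyx; ring].
  - transitivity (fst V * (fst gy * det2 fx fy) + snd V * (snd gy * det2 fx fy));
      [ring | rewrite Exy, Eyy; ring].
Qed.

Hypothesis p_pos : 0 < p.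
Hypothesis conf_diag : p ^ 2 * Cdot fx fx + fst V ^ 2 = p ^ 2 * Cdot fy fy + snd V ^ 2.
Hypothesis conf_off : p ^ 2 * Cdot fx fy + fst V * snd V = 0.

Let E := p ^ 2 * Cdot fx fx + fst V ^ 2.

Lemma energy_det : E * (E - Cdot V V) = p ^ 4 * det2 fx fy ^ 2.
Proof.
  assert (Hdiag : p ^ 2 * Cdot fx fx + fst V ^ 2 - (p ^ 2 * Cdot fy fy + snd V ^ 2) = 0) by lra.
  transitivity (p ^ 4 * det2 fx fy ^ 2
     + p ^ 2 * Cdot fx fx * (p ^ 2 * Cdot fx fx + fst V ^ 2 - (p ^ 2 * Cdot fy fy + snd V ^ 2))
     + (p ^ 2 * Cdot fx fy - fst V * snd V) * (p ^ 2 * Cdot fx fy + fst V * snd V)).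
  - unfold E, Cdot, det2. ring.
  - rewrite Hdiag, conf_off. ring.
Qed.

Lemma energy_pos : 0 < E.
Proof.
  assert (HJ : det2 fx fy <> 0).
  { intros HJ. pose proof det2_inverse as H. rewrite HJ in H. lra. }
  assert (HE : 0 <= E) by (unfold E, Cdot; nra).
  destruct (Req_dec E 0) as [HE0 | HE0]; [| lra].
  pose proof energy_det as H. rewrite HE0, Rmult_0_l in H.
  assert (0 < det2 fx fy ^ 2)
    by (pose proof (pow2_ge_0 (det2 fx fy)); pose proof (pow_nonzero _ 2 HJ); lra).
  assert (0 < p ^ 4) by (apply pow_lt; lra).
  nra.
Qed.

Lemma grad_energy :
  p ^ 2 * ((fst V * snd fy - snd V * snd fx) ^ 2 + (snd V * fst fx - fst V * fst fy) ^ 2)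
  = E * Cdot V V.
Proof.
  assert (Hdiag : p ^ 2 * Cdot fx fx + fst V ^ 2 - (p ^ 2 * Cdot fy fy + snd V ^ 2) = 0) by lra.
  transitivity (E * Cdot V V
     - fst V ^ 2 * (p ^ 2 * Cdot fx fx + fst V ^ 2 - (p ^ 2 * Cdot fy fy + snd V ^ 2))
     - 2 * fst V * snd V * (p ^ 2 * Cdot fx fy + fst V * snd V)).
  - unfold E, Cdot. ring.
  - rewrite Hdiag, conf_off. ring.
Qed.

Lemma grad_mul_det_energy :
  p ^ 2 * det2 fx fy * (fst V * snd fy - snd V * snd fx) = E * (fst V * fst fx + snd V * fst fy) /\
  p ^ 2 * det2 fx fy * (snd V * fst fx - fst V * fst fy) = E * (fst V * snd fx + snd V * snd fy).
Proof.
  assert (Hdiag : p ^ 2 * Cdot fx fx + fst V ^ 2 - (p ^ 2 * Cdot fy fy + snd V ^ 2) = 0) by lra.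
  split.
  - transitivity (E * (fst V * fst fx + snd V * fst fy)
       - fst V * fst fx * (p ^ 2 * Cdot fx fx + fst V ^ 2 - (p ^ 2 * Cdot fy fy + snd V ^ 2))
       - (snd V * fst fx + fst V * fst fy) * (p ^ 2 * Cdot fx fy + fst V * snd V)).
    + unfold E, Cdot, det2. ring.
    + rewrite Hdiag, conf_off. ring.
  - transitivity (E * (fst V * snd fx + snd V * snd fy)
       - fst V * snd fx * (p ^ 2 * Cdot fx fx + fst V ^ 2 - (p ^ 2 * Cdot fy fy + snd V ^ 2))
       - (snd V * snd fx + fst V * snd fy) * (p ^ 2 * Cdot fx fy + fst V * snd V)).
    + unfold E, Cdot, det2. ring.
    + rewrite Hdiag, conf_off. ring.
Qed.

Variable s : R.
Hypothesis sign_sq : s * s = 1.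
Hypothesis sign_det2 : 0 < s * det2 gx gy.

Lemma sign_det2_inverse : 0 < s * det2 fx fy.
Proof.
  replace (s * det2 fx fy) with (s * det2 gx gy * det2 fx fy ^ 2)
    by (transitivity (s * det2 fx fy * (det2 gx gy * det2 fx fy)); [ring | rewrite det2_inverse; ring]).
  assert (HJ : det2 fx fy <> 0).
  { intros HJ. pose proof det2_inverse as H. rewrite HJ in H. lra. }
  apply Rmult_lt_0_compat; [exact sign_det2 |].
  pose proof (pow2_ge_0 (det2 fx fy)). pose proof (pow_nonzero _ 2 HJ). lra.
Qed.

Lemma flux_denominator :
  sqrt (1 + (Cdot V gx ^ 2 + Cdot V gy ^ 2) / p ^ 2) = E / (p ^ 2 * (s * det2 fx fy)).
Proof.
  pose proof sign_det2_inverse as HsJ. pose proof energy_pos as HE.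
  assert (HJ : det2 fx fy <> 0) by (intros HJ; rewrite HJ, Rmult_0_r in HsJ; lra).
  assert (Hs : s <> 0) by (intros Hs; rewrite Hs, Rmult_0_l in HsJ; lra).
  destruct grad_mul_det as [Hgx Hgy].
  replace (Cdot V gx) with ((fst V * snd fy - snd V * snd fx) / det2 fx fy)
    by (rewrite <- Hgx; field; exact HJ).
  replace (Cdot V gy) with ((snd V * fst fx - fst V * fst fy) / det2 fx fy)
    by (rewrite <- Hgy; field; exact HJ).
  rewrite <- (sqrt_Rsqr (E / (p ^ 2 * (s * det2 fx fy)))).
  2: { apply Rlt_le, Rdiv_lt_0_compat; [exact HE |]. apply Rmult_lt_0_compat; [apply pow_lt |]; lra. }
  f_equal. unfold Rsqr.
  transitivity ((p ^ 4 * det2 fx fy ^ 2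
      + p ^ 2 * ((fst V * snd fy - snd V * snd fx) ^ 2 + (snd V * fst fx - fst V * fst fy) ^ 2))
      / (p ^ 4 * det2 fx fy ^ 2)).
  { field. split; lra. }
  replace (p ^ 4 * det2 fx fy ^ 2
      + p ^ 2 * ((fst V * snd fy - snd V * snd fx) ^ 2 + (snd V * fst fx - fst V * fst fy) ^ 2))
    with (E * E) by (rewrite grad_energy, <- energy_det; ring).
  transitivity (E * E / (p ^ 4 * (s * s) * det2 fx fy ^ 2)).
  { rewrite sign_sq. field. split; [exact HJ |]. lra. }
  field. repeat split; lra.
Qed.

Lemma flux_algebra :
  Cdot V gx / sqrt (1 + (Cdot V gx ^ 2 + Cdot V gy ^ 2) / p ^ 2) = s * det2 V gy /\
  Cdot V gy / sqrt (1 + (Cdot V gx ^ 2 + Cdot V gy ^ 2) / p ^ 2) = s * det2 gx V.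
Proof.
  pose proof sign_det2_inverse as HsJ. pose proof energy_pos as HE.
  assert (HJ : det2 fx fy <> 0) by (intros HJ; rewrite HJ, Rmult_0_r in HsJ; lra).
  assert (Hs : s <> 0) by (intros Hs; rewrite Hs, Rmult_0_l in HsJ; lra).
  destruct grad_mul_det as [Hgx Hgy]. destruct grad_mul_det_energy as [Ix Iy].
  destruct inverse_cramer as [Exx [Exy [Eyx Eyy]]].
  rewrite flux_denominator.
  change (det2 V gy) with (fst V * snd gy - fst gy * snd V).
  change (det2 gx V) with (fst gx * snd V - fst V * snd gx).
  split.
  - replace (Cdot V gx) with ((fst V * snd fy - snd V * snd fx) / det2 fx fy)
      by (rewrite <- Hgx; field; exact HJ).
    replace (snd gy) with (fst fx / det2 fx fy) by (rewrite <- Eyy; field; exact HJ).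
    replace (fst gy) with (- fst fy / det2 fx fy) by (rewrite <- Exy; field; exact HJ).
    transitivity (s * (p ^ 2 * det2 fx fy * (fst V * snd fy - snd V * snd fx)) / (E * det2 fx fy)).
    { field. repeat split; lra. }
    rewrite Ix. field. split; lra.
  - replace (Cdot V gy) with ((snd V * fst fx - fst V * fst fy) / det2 fx fy)
      by (rewrite <- Hgy; field; exact HJ).
    replace (fst gx) with (snd fy / det2 fx fy) by (rewrite <- Exx; field; exact HJ).
    replace (snd gx) with (- snd fx / det2 fx fy) by (rewrite <- Eyx; field; exact HJ).
    transitivity (s * (p ^ 2 * det2 fx fy * (snd V * fst fx - fst V * fst fy)) / (E * det2 fx fy)).
    { field. repeat split; lra. }
    rewrite Iy. field. split; lra.
Qed.

End FluxAlgebra.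

(* [adj (Dg) (V o g)], the Piola transform of [V] under [g]. *)
Definition piola (g V : C -> C) (w : C) : C :=
  (det2 (V (g w)) (dy g w), det2 (dx g w) (V (g w))).

Lemma piola_divergence (U : C -> Prop) (g V : C -> C) (w : C) (Px Py Qx Qy : R) :
  open U -> smooth_map_on U g -> U w ->
  curve_differentiable_at (fun z => fst (V z)) (g w) Px Py ->
  curve_differentiable_at (fun z => snd (V z)) (g w) Qx Qy ->
  exists Lx Ly,
    is_derive (fun t => fst (piola g V (t, snd w))) (fst w) Lx /\
    is_derive (fun t => snd (piola g V (fst w, t))) (snd w) Ly /\
    Lx + Ly = det2 (dx g w) (dy g w) * (Px + Qy).
Proof.
  intros HU Hg Hw HP HQ. pose proof Hg as [Hg1 Hg2].
  destruct (curve_differentiable_lines U _ g w _ _ Hg Hw HP) as [Pu Pv].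
  destruct (curve_differentiable_lines U _ g w _ _ Hg Hw HQ) as [Qu Qv].
  pose proof (smooth_on_is_derive_x U _ w (smooth_on_partial_y U _ Hg1) Hw) as G1yx.
  pose proof (smooth_on_is_derive_x U _ w (smooth_on_partial_y U _ Hg2) Hw) as G2yx.
  pose proof (smooth_on_is_derive_y U _ w (smooth_on_partial_x U _ Hg1) Hw) as G1xy.
  pose proof (smooth_on_is_derive_y U _ w (smooth_on_partial_x U _ Hg2) Hw) as G2xy.
  eexists _, _. split; [| split].
  - exact (is_derive_mul_sub _ _ _ _ _ _ _ _ _ Pu G2yx G1yx Qu).
  - exact (is_derive_mul_sub _ _ _ _ _ _ _ _ _ G1xy Qv Pv G2xy).
  - rewrite (smooth_on_partial_xy U _ w HU Hg1 Hw), (smooth_on_partial_xy U _ w HU Hg2 Hw).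
    unfold det2. destruct w as [x y]. simpl. ring.
Qed.

Lemma divergence_scal_ext_loc (F1 F2 H1 H2 : C -> R) (s Lx Ly : R) (w : C) :
  locally w (fun q => F1 q = s * H1 q /\ F2 q = s * H2 q) ->
  is_derive (fun t => H1 (t, snd w)) (fst w) Lx ->
  is_derive (fun t => H2 (fst w, t)) (snd w) Ly ->
  ex_derive (fun t => F1 (t, snd w)) (fst w) /\ ex_derive (fun t => F2 (fst w, t)) (snd w) /\
  partial_x F1 w + partial_y F2 w = s * (Lx + Ly).
Proof.
  intros Hloc HLx HLy.
  assert (DX : is_derive (fun t => F1 (t, snd w)) (fst w) (s * Lx)).
  { apply (is_derive_ext_loc (fun t => s * H1 (t, snd w))); [| exact (is_derive_scal _ _ s _ HLx)].
    eapply filter_imp; [| exact (locally_line_x _ _ Hloc)]. intros t [Ht _]. symmetry. exact Ht. }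
  assert (DY : is_derive (fun t => F2 (fst w, t)) (snd w) (s * Ly)).
  { apply (is_derive_ext_loc (fun t => s * H2 (fst w, t))); [| exact (is_derive_scal _ _ s _ HLy)].
    eapply filter_imp; [| exact (locally_line_y _ _ Hloc)]. intros t [_ Ht]. symmetry. exact Ht. }
  split; [exists (s * Lx); exact DX |]. split; [exists (s * Ly); exact DY |].
  replace (partial_x F1 w) with (s * Lx) by (symmetry; exact (is_derive_unique _ _ _ DX)).
  replace (partial_y F2 w) with (s * Ly) by (symmetry; exact (is_derive_unique _ _ _ DY)).
  ring.
Qed.

Section Setting.

Variables (D Om : C -> Prop) (wp : C -> R) (f g : C -> C) (c : R) (theta : C -> R).

Hypothesis D_open : open D.
Hypothesis Om_open : open Om.
Hypothesis D_no_origin : ~ D (0, 0).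
Hypothesis wp_pos : forall w, Om w -> 0 < wp w.
Hypothesis f_diffeo : diffeo D Om f g.
Hypothesis f_hopf : forall z, D z ->
  Cmult (RtoC (wp (f z) ^ 2)) (Cmult (f_z f z) (Cconj (f_zbar f z))) = Cdiv (RtoC c) (Cmult z z).
Hypothesis c_neq0 : c <> 0.
Hypothesis theta_arg : 0 < c -> arg_branch D theta.

Lemma omega_line_derivatives (w : C) : Om w ->
  is_derive (fun t => omega c g theta (t, snd w)) (fst w)
    (Cdot (log_grad (potential_coef c) (g w)) (dx g w)) /\
  is_derive (fun t => omega c g theta (fst w, t)) (snd w)
    (Cdot (log_grad (potential_coef c) (g w)) (dy g w)).
Proof.
  intros Hw. destruct f_diffeo as [_ [HgD [_ [_ [_ Hg]]]]].
  exact (curve_differentiable_lines Om _ g w _ _ Hg Hw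
           (potential_curve_differentiable D c theta (g w) D_open D_no_origin c_neq0 theta_arg (HgD w Hw))).
Qed.

Lemma flux_eq_piola (w : C) (s : R) :
  Om w -> s * s = 1 -> 0 < s * det2 (dx g w) (dy g w) ->
  flux_x wp (omega c g theta) w = s * fst (piola g (log_grad (potential_coef c)) w) /\
  flux_y wp (omega c g theta) w = s * snd (piola g (log_grad (potential_coef c)) w).
Proof.
  intros Hw Hs Hsdet. pose proof f_diffeo as [_ [HgD [_ [Hfg _]]]].
  assert (Hz : D (g w)) by now apply HgD.
  assert (Hz0 : g w <> (0, 0)) by (intros E; rewrite E in Hz; exact (D_no_origin Hz)).
  destruct (omega_line_derivatives w Hw) as [Ox Oy].
  destruct (diffeo_jacobian_inverse D Om f g w D_open Om_open f_diffeo Hw) as [I1 [I2 [I3 I4]]].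
  pose proof (f_hopf (g w) Hz) as Hh. rewrite (Hfg w Hw) in Hh.
  destruct (hopf_real_parts f (g w) (wp w) c Hz0 Hh) as [Hdiag Hoff].
  destruct (potential_coef_sq c) as [Hre Him].
  destruct (log_grad_sq (potential_coef c) (g w) c Hz0 Hre Him) as [Vdiag Voff].
  unfold flux_x, flux_y.
  replace (partial_x (omega c g theta) w) with (Cdot (log_grad (potential_coef c) (g w)) (dx g w))
    by (symmetry; exact (is_derive_unique _ _ _ Ox)).
  replace (partial_y (omega c g theta) w) with (Cdot (log_grad (potential_coef c) (g w)) (dy g w))
    by (symmetry; exact (is_derive_unique _ _ _ Oy)).
  apply (flux_algebra (dx f (g w)) (dy f (g w))); auto; lra.
Qed.

Lemma flux_locally_piola (w0 : C) : Om w0 ->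
  exists s, locally w0 (fun w =>
    flux_x wp (omega c g theta) w = s * fst (piola g (log_grad (potential_coef c)) w) /\
    flux_y wp (omega c g theta) w = s * snd (piola g (log_grad (potential_coef c)) w)).
Proof.
  intros Hw0. pose proof f_diffeo as [_ [_ [_ [_ [_ Hg]]]]].
  destruct (diffeo_jacobian_inverse D Om f g w0 D_open Om_open f_diffeo Hw0) as [I1 [I2 [I3 I4]]].
  pose proof (det2_inverse _ _ _ _ I1 I2 I3 I4) as Hdet.
  set (s := if Rlt_dec 0 (det2 (dx g w0) (dy g w0)) then 1 else -1).
  assert (Hs : s * s = 1) by (unfold s; destruct Rlt_dec; ring).
  assert (Hs0 : 0 < s * det2 (dx g w0) (dy g w0)).
  { unfold s. destruct Rlt_dec as [Hpos | Hpos]; [lra |].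
    destruct (Rle_lt_or_eq_dec _ _ (Rnot_lt_le _ _ Hpos)) as [Hneg | Hzero]; [lra |].
    rewrite Hzero, Rmult_0_l in Hdet. lra. }
  exists s.
  assert (Hnear : locally w0 (fun w => 0 < s * det2 (dx g w) (dy g w))).
  { apply (@continuous_mult _ R_AbsRing (fun _ => s) (fun w => det2 (dx g w) (dy g w)) w0
             (continuous_const s w0) (jacobian_det_continuous Om g w0 Hg Hw0)).
    exact (open_gt 0 _ Hs0). }
  generalize (filter_and _ _ Hnear (Om_open w0 Hw0)). apply filter_imp.
  intros w [Hsw Hw]. exact (flux_eq_piola w s Hw Hs Hsw).
Qed.

End Setting.

Theorem proposition3p4
  (D Om : R * R -> Prop) (wp : R * R -> R) (f g : C -> C) (c : R)
  (theta : C -> R) :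
  planar_domain D -> planar_domain Om -> ~ D (0, 0) ->
  smooth_on Om wp -> (forall w, Om w -> 0 < wp w) ->
  diffeo D Om f g ->
  (forall z, D z ->
     Cmult (RtoC (wp (f z) ^ 2)) (Cmult (f_z f z) (Cconj (f_zbar f z)))
     = Cdiv (RtoC c) (Cmult z z)) ->
  c <> 0 ->
  (0 < c -> arg_branch D theta) ->
  (forall w, Om w ->
     ex_derive (fun t => omega c g theta (t, snd w)) (fst w) /\
     ex_derive (fun t => omega c g theta (fst w, t)) (snd w)) /\
  (forall w, Om w ->
     ex_derive (fun t => flux_x wp (omega c g theta) (t, snd w)) (fst w) /\
     ex_derive (fun t => flux_y wp (omega c g theta) (fst w, t)) (snd w) /\
     partial_x (flux_x wp (omega c g theta)) w
     + partial_y (flux_y wp (omega c g theta)) w = 0).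
Proof.
  (* [wp] cancels out of the flux (see [flux_algebra]). *)
  intros [_ [HD _]] [_ [HOm _]] H0 _ Hwp Hf Hhopf Hc Harg.
  split.
  - intros w Hw.
    destruct (omega_line_derivatives D Om f g c theta HD H0 Hf Hc Harg w Hw) as [Ox Oy].
    split; eexists; eassumption.
  - intros w Hw. pose proof Hf as [_ [HgD [_ [_ [_ Hg]]]]].
    assert (Hz0 : g w <> (0, 0)) by (intros E; apply H0; rewrite <- E; exact (HgD w Hw)).
    destruct (flux_locally_piola D Om wp f g c theta HD HOm H0 Hwp Hf Hhopf Hc Harg w Hw)
      as [s Hflux].
    destruct (log_grad_curve_differentiable (potential_coef c) (g w) Hz0) as [HP HQ].
    destruct (piola_divergence Om g _ w _ _ _ _ HOm Hg Hw HP HQ) as [Lx [Ly [HLx [HLy Hdiv]]]].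
    destruct (divergence_scal_ext_loc _ _ _ _ s Lx Ly w Hflux HLx HLy) as [Ex [Ey Hsum]].
    repeat split; [exact Ex | exact Ey |].
    rewrite Hsum, Hdiv. ring.
Qed.
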